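(* Assume the standing setting below. Let $\alpha\in(0,1/6]$ with $\alpha n$ an integer, let $P_1,P_2\subseteq X$ be disjoint with $|P_1|=|P_2|=\alpha n$, let $T\subseteq X$ be nonempty, and set $\psi:=\frac{1}{3\alpha}R_{2\alpha(k+1)\phi_\alpha}(P_2,T)$. Define $F_b:=\mathrm{far}_{k\phi_\alpha}(X\setminus P_1,T)$, let $\mathcal{B}_b$ be a $(\phi_\alpha/3)$-linear bin division of $(X\setminus P_1)\setminus F_b$ with respect to $T$; define $F_c:=\mathrm{far}_{4(k+1)\phi_\alpha}(X\setminus P_1,T)$ and let $\mathcal{B}_c$ be a $(\phi_\alpha/3)$-linear bin division of $(X\setminus P_1)\setminus F_c$ with respect to $T$. (a) If each of $F_b$ and $\mathcal{B}_b$ is trivial or well-represented in $P_2$ for $X\setminus P_1$, then $\psi\le R_{k\phi_\alpha}(X,T)$. (b) If each of $F_c$ and $\mathcal{B}_c$ is trivial or well-represented in $P_2$ for $X\setminus P_1$, then $\frac19 R_{5(k+1)\phi_\alpha}(X\setminus P_1,T)\le\psi$.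
   Context: Standing setting: $(X,\rho)$ is a finite metric space with $|X|=n$; $k\ge2$ is an integer and $\delta\in(0,1)$; $\log$ is the natural logarithm; for $\alpha>0$, $\phi_\alpha:=150\log(32k/\delta)/\alpha$. For nonempty $T\subseteq X$, $\rho(x,T):=\min_{y\in T}\rho(x,y)$ and $R(S,T):=\sum_{x\in S}\rho(x,T)$; ties are broken by a fixed ordering of $X$. For $S\subseteq X$ and real $r\ge0$, $\mathrm{far}_r(S,T)$ is the set of the $\lceil r\rceil$ points of $S$ furthest from $T$ (ties broken by the fixed ordering); if $|S|<r$, $\mathrm{far}_r(S,T):=S$ and it is called a trivial far set. $R_r(S,T):=R(S\setminus\mathrm{far}_r(S,T),T)$. For finite $W$, $A,B\subseteq W$, $B$ is well-represented in $A$ for $W$ if $|B\cap A|/|B|\in[r/2,\frac32 r]$ with $r=|A|/|W|$; a bin division is well-represented if all its bins are. A $z$-linear bin division ($z>0$) of $W$ with respect to $T$ is a partition $(\mathcal{B}(1),\ldots,\mathcal{B}(L))$ of $W$ with: (1) if $z\le|W|$, $|\mathcal{B}(i)|\ge z(i+1)/2$ for all $i$; otherwise it is trivial, $\mathcal{B}(1):=W$; (2) $|\mathcal{B}(1)|\le\frac52 z$; (3) $|\mathcal{B}(i+1)|/|\mathcal{B}(i)|\le3/2$; (4) $\rho(x,T)\ge\rho(x',T)$ whenever $x\in\mathcal{B}(i)$, $x'\in\mathcal{B}(i+1)$. *)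

From HB Require Import structures.
From mathcomp Require Import all_boot all_order all_algebra.
From mathcomp Require Import reals exp.
Set Implicit Arguments. Unset Strict Implicit. Unset Printing Implicit Defensive.
Import Order.TTheory GRing.Theory Num.Theory.
Local Open Scope ring_scope.

Section Defs.
Variables (R : realType) (X : finType).

Definition is_metric (rho : X -> X -> R) : Prop :=
  [/\ forall x y, 0 <= rho x y,
      forall x y, rho x y = 0 <-> x = y,
      forall x y, rho x y = rho y x
    & forall x y z, rho x z <= rho x y + rho y z].

(* rho(x,T) = min_{y in T} rho(x,y)  (T nonempty; 0 by convention otherwise) *)
Definition distT (rho : X -> X -> R) (x : X) (T : {set X}) : R :=
  match [pick y in T] with
  | Some y0 => \big[Num.min/rho x y0]_(y in T) rho x y
  | None => 0
  end.

Definition Rcost (rho : X -> X -> R) (S T : {set X}) : R :=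
  \sum_(x in S) distT rho x T.

Definition further (rho : X -> X -> R) (ord : X -> nat) (T : {set X}) (y x : X) : bool :=
  (distT rho x T < distT rho y T) || ((distT rho y T == distT rho x T) && (ord y < ord x)%N).

(* far_r(S,T): the ceil(r) points of S furthest from T (all of S if |S| < r) *)
Definition far (rho : X -> X -> R) (ord : X -> nat) (r : R) (S T : {set X}) : {set X} :=
  if (#|S|%:R < r) then S
  else [set x in S | (#|[set y in S | further rho ord T y x]|%:Z < Num.ceil r)%R].

Definition far_trivial (r : R) (S : {set X}) : bool := (#|S|%:R < r).

Definition Rr (rho : X -> X -> R) (ord : X -> nat) (r : R) (S T : {set X}) : R :=
  Rcost rho (S :\: far rho ord r S T) T.

Definition well_rep (W A B : {set X}) : bool :=
  let r : R := #|A|%:R / #|W|%:R in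
  (r / 2 <= #|B :&: A|%:R / #|B|%:R) && (#|B :&: A|%:R / #|B|%:R <= 3%:R / 2 * r).

(* bins = [:: B(1); ...; B(L)], so B(i+1) = nth set0 bins i *)
Definition linear_bin_division (rho : X -> X -> R) (z : R) (W T : {set X})
  (bins : seq {set X}) : Prop :=
  let B := fun i => nth set0 bins i in
  (\bigcup_(b <- bins) b = W) /\
  (forall i j, (i < j < size bins)%N -> [disjoint B i & B j]) /\
      (z <= #|W|%:R -> forall i, (i < size bins)%N -> z * (i.+2)%:R / 2 <= #|B i|%:R) /\
  (#|W|%:R < z -> bins = [:: W]) /\
  ((0 < size bins)%N /\ #|B 0%N|%:R <= 5%:R / 2 * z) /\
  (forall i, (i.+1 < size bins)%N -> (#|B i.+1|%:R / #|B i|%:R : R) <= 3%:R / 2) /\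
  (forall i x x', (i.+1 < size bins)%N -> x \in B i -> x' \in B i.+1 ->
         distT rho x' T <= distT rho x T).

Definition bin_trivial (z : R) (W : {set X}) : bool := (#|W|%:R < z).

Definition bins_well_rep (W A : {set X}) (bins : seq {set X}) : bool :=
  all (well_rep W A) bins.

Definition phi (k : nat) (delta alpha : R) : R :=
  150%:R * ln (32%:R * k%:R / delta) / alpha.

End Defs.

From HB Require Import structures.
From mathcomp Require Import all_boot all_order all_algebra.
From mathcomp Require Import reals exp.
From mathcomp Require Import lra.
Set Implicit Arguments. Unset Strict Implicit. Unset Printing Implicit Defensive.
Import Order.TTheory GRing.Theory Num.Theory.
Local Open Scope ring_scope.

(* Lemma 8: the cost of a well-represented sample P2 of a metric space, after
   discarding its far points, estimates the cost of the whole space.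

   It dominates the rest of S (far_dominates), a point dominated
     by ceil(r) points of S is not far (notin_far), and removing it is optimal among
     all removals of at most r points (far_exchange).
   - A well-represented linear bin division of W: consecutive bins are ordered by
     distance, grow slowly and meet P in proportion about |P|/|Y|, which bounds
     the cost of W /\ P from above (bins_upper) and below (bins_lower) outside the
     first bin.
   - Part (a) removes P2 /\ (F_b \/ first bin) from P2; part (b) removes
     F_c \/ first bin from X \ P1 and notes P2 /\ W lies outside the far set of P2.
   The theorem follows from both parts, phi >= 2 and alpha|Y| <= |P2| <= 6/5 alpha|Y|. *)

Section Averaging.
Variables (R : realFieldType) (X : finType) (f : X -> R).
Hypothesis f_ge0 : forall x, 0 <= f x.

Lemma sum_dominated (U V : {set X}) (a b : R) :
  0 <= a -> (forall x y, x \in U -> y \in V -> f x <= f y) ->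
  a * #|U|%:R <= b * #|V|%:R ->
  a * \sum_(x in U) f x <= b * \sum_(y in V) f y.
Proof.
move=> a_ge0 dom le_card.
have sumV_ge0 : 0 <= \sum_(y in V) f y by apply: sumr_ge0.
have [/eqP|V_gt0] := posnP #|V|.
  rewrite cards_eq0 => /eqP V0; rewrite V0 big_set0 cards0 !mulr0 in le_card *.
  have [/eqP|U_gt0] := posnP #|U|.
    by rewrite cards_eq0 => /eqP->; rewrite big_set0 mulr0.
  have a0 : a = 0.
    have U_pos : (0 : R) < #|U|%:R by rewrite ltr0n.
    by apply/eqP; rewrite eq_le a_ge0 andbT -(pmulr_rle0 _ U_pos) mulrC.
  by rewrite a0 mul0r.
have cross : #|V|%:R * \sum_(x in U) f x <= #|U|%:R * \sum_(y in V) f y.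
  rewrite !mulr_natl -sumr_const -sumrMnl; apply: ler_sum => y yV.
  by rewrite -sumr_const; apply: ler_sum => x xU; apply: dom.
have V_pos : (0 : R) < #|V|%:R by rewrite ltr0n.
rewrite -(ler_pM2l V_pos).
have := ler_wpM2l a_ge0 cross; have := ler_wpM2r sumV_ge0 le_card.
by move=> h1 h2; nra.
Qed.
End Averaging.

Section NatCeil.
Variable R : archiFieldType.

(* The natural ceiling of r >= 0: the size of a nontrivial far set far_r. *)
Definition nceil (r : R) : nat := `|Num.ceil r|%N.

Lemma nceilE (r : R) : 0 <= r -> (nceil r)%:Z = Num.ceil r.
Proof. by move=> r0; rewrite gez0_abs // ceil_ge0 (lt_le_trans _ r0) // ltrN10. Qed.

Lemma nceil_ge (r : R) : 0 <= r -> r <= (nceil r)%:R.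
Proof. by move=> r0; rewrite -[_%:R]/((nceil r)%:~R) nceilE // ceil_ge. Qed.

Lemma nceil_lt (r : R) : 0 <= r -> (nceil r)%:R < r + 1.
Proof.
move=> r0; rewrite -[_%:R]/((nceil r)%:~R) nceilE //.
by rewrite -ltrBlDr -[1]/(1%:~R) -intrB ceilB1_lt.
Qed.

Lemma nceil_le (r : R) (a : nat) : 0 <= r -> r <= a%:R -> (nceil r <= a)%N.
Proof. by move=> r0 ra; rewrite -lez_nat nceilE // ceil_le_int. Qed.
End NatCeil.

Lemma card_set_count (X : finType) (S : {set X}) (P : pred X) :
  #|[set x in S | P x]| = count P (enum S).
Proof.
rewrite cardsE cardE -size_filter /enum_mem -filter_predI.
by congr size; apply: eq_filter => x; rewrite /= andbC.
Qed.

Lemma count_iota_lt m n : count (fun i => (i < m)%N) (iota 0 n) = minn m n.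
Proof.
rewrite -size_filter; case: (leqP m n) => h.
  by rewrite (filter_iota_ltn 0 h) size_iota.
rewrite (eq_in_filter (a2 := predT)) ?filter_predT ?size_iota //.
by move=> i; rewrite mem_iota add0n => /andP[_ lt_in]; apply: leq_trans lt_in (ltnW h).
Qed.

Section FurtherOrder.
Variables (R : realType) (X : finType) (rho : X -> X -> R) (ord : X -> nat).
Variable T : {set X}.
Hypothesis ord_inj : injective ord.
Local Notation D x := (distT rho x T).
Local Notation further := (further rho ord T).

Lemma further_irrefl x : ~~ further x x.
Proof. by rewrite /further ltxx eqxx ltnn. Qed.

Lemma further_dist y x : further y x -> D x <= D y.
Proof. by rewrite /further => /orP[/ltW//|/andP[/eqP-> _]]. Qed.

Lemma further_trans a b c : further a b -> further b c -> further a c.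
Proof.
rewrite /further => /orP[h1|/andP[/eqP e1 h1]] /orP[h2|/andP[/eqP e2 h2]].
- by rewrite (lt_trans h2 h1).
- by rewrite -e2 h1.
- by rewrite e1 h2.
- by rewrite e1 e2 eqxx (ltn_trans h1 h2) orbT.
Qed.

Lemma further_total x y : x != y -> further x y || further y x.
Proof.
move=> nxy; rewrite /further; case: (ltgtP (D x) (D y)) => //= _.
have : ord x != ord y by apply: contra nxy => /eqP /ord_inj ->.
by case: ltngtP.
Qed.

Definition rank (S : {set X}) (x : X) : nat := #|[set y in S | further y x]|.

Lemma rank_lt (S : {set X}) x y : y \in S -> further y x -> (rank S y < rank S x)%N.
Proof.
move=> yS fyx; apply: proper_card; apply/properP; split.
  by apply/subsetP => z; rewrite !inE => /andP[-> /further_trans->].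
by exists y; rewrite !inE ?yS ?fyx // (negbTE (further_irrefl y)) andbF.
Qed.

Lemma rank_lt_card (S : {set X}) x : x \in S -> (rank S x < #|S|)%N.
Proof.
move=> xS; apply: proper_card; apply/properP; split.
  by apply/subsetP => z; rewrite inE => /andP[].
by exists x; rewrite // inE (negbTE (further_irrefl x)) andbF.
Qed.

Lemma rank_inj (S : {set X}) : {in S &, injective (rank S)}.
Proof.
move=> x y xS yS e; apply/eqP; apply: contraT => /further_total/orP[] h.
  by move: (rank_lt xS h); rewrite e ltnn.
by move: (rank_lt yS h); rewrite e ltnn.
Qed.

(* The ranks of the points of S are exactly 0, ..., #|S|-1, so exactly
   min(m, #|S|) points of S have rank below m. *)
Lemma card_rank_below (S : {set X}) m :
  #|[set x in S | (rank S x < m)%N]| = minn m #|S|.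
Proof.
have uniq_ranks : uniq [seq rank S x | x <- enum S].
  by rewrite map_inj_in_uniq ?enum_uniq // => x y; rewrite !mem_enum; apply: rank_inj.
have ranks_sub : {subset [seq rank S x | x <- enum S] <= iota 0 #|S|}.
  by move=> _ /mapP[x xS ->]; rewrite mem_iota add0n rank_lt_card // -mem_enum.
have size_ranks : (size (iota 0 #|S|) <= size [seq rank S x | x <- enum S])%N.
  by rewrite size_map size_iota cardE.
have [_ same_ranks] := uniq_min_size uniq_ranks ranks_sub size_ranks.
have /permP perm_ranks := uniq_perm uniq_ranks (iota_uniq 0 #|S|) same_ranks.
by rewrite card_set_count -count_iota_lt -perm_ranks count_map.
Qed.

Lemma far_subset (r : R) (S : {set X}) : far rho ord r S T \subset S.
Proof. by rewrite /far; case: ifP => // _; apply/subsetP => x; rewrite inE => /andP[]. Qed.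

Lemma far_rankE (r : R) (S : {set X}) : 0 <= r -> ~~ (#|S|%:R < r) ->
  far rho ord r S T = [set x in S | (rank S x < nceil r)%N].
Proof.
by move=> r0 nt; rewrite /far (negbTE nt); apply/setP => x; rewrite !inE -nceilE // ltz_nat.
Qed.

Lemma card_far_ge (r : R) (S : {set X}) : 0 <= r ->
  (minn (nceil r) #|S| <= #|far rho ord r S T|)%N.
Proof.
move=> r0; have [small|nt] := boolP (#|S|%:R < r); last by rewrite far_rankE // card_rank_below.
by rewrite /far small geq_minr.
Qed.

Lemma card_far (r : R) (S : {set X}) : 0 <= r -> ~~ (#|S|%:R < r) ->
  #|far rho ord r S T| = nceil r.
Proof.
move=> r0 nt; rewrite far_rankE // card_rank_below; apply/minn_idPl.
by apply: nceil_le; rewrite // leNgt.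
Qed.

Lemma far_dominates (r : R) (S : {set X}) y x :
  y \in far rho ord r S T -> x \in S :\: far rho ord r S T -> further y x.
Proof.
rewrite /far; case: ifP => _; first by rewrite inE andNb.
rewrite !inE => /andP[yS y_lt] /andP[x_nlt xS].
have nxy : y != x by apply: contraNneq x_nlt => <-; rewrite yS.
case/orP: (further_total nxy) => // fxy; case/negP: x_nlt; rewrite xS.
by apply: lt_trans y_lt; rewrite ltz_nat; apply: rank_lt.
Qed.

Lemma notin_far (r : R) (S A : {set X}) x : 0 <= r -> x \in S -> A \subset S ->
  (forall y, y \in A -> further y x) -> (nceil r <= #|A|)%N ->
  x \notin far rho ord r S T.
Proof.
move=> r0 xS AS domA le_A.
have rank_x : (#|A| <= rank S x)%N.
  by apply: subset_leq_card; apply/subsetP => y yA; rewrite inE (subsetP AS) ?domA.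
have [small|nt] := boolP (#|S|%:R < r).
  have : r <= #|S|%:R.
    by apply: le_trans (nceil_ge r0) _; rewrite ler_nat (leq_trans le_A) ?subset_leq_card.
  by rewrite leNgt small.
by rewrite far_rankE // inE xS -leqNgt (leq_trans le_A).
Qed.

Lemma Rr_eq0 (r : R) (S : {set X}) : 0 <= r -> #|S|%:R <= r -> Rr rho ord r S T = 0.
Proof.
move=> r0 le_S; suff far_all : far rho ord r S T = S by rewrite /Rr far_all setDv /Rcost big_set0.
have [small|nt] := boolP (#|S|%:R < r); first by rewrite /far small.
apply/eqP; rewrite eqEcard far_subset card_far // -(ler_nat R).
exact: le_trans le_S (nceil_ge r0).
Qed.

Hypothesis dist_ge0 : forall x, 0 <= D x.

Lemma Rr_ge0 (r : R) (S : {set X}) : 0 <= Rr rho ord r S T.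
Proof. exact: sumr_ge0. Qed.

Lemma Rcost_subset (A S : {set X}) : A \subset S -> Rcost rho A T <= Rcost rho S T.
Proof.
by move=> AS; rewrite /Rcost [leRHS](big_setID A) (setIidPr AS) lerDl sumr_ge0.
Qed.

Lemma far_exchange (r : R) (S A : {set X}) : 0 <= r -> A \subset S -> #|A|%:R <= r ->
  Rr rho ord r S T <= Rcost rho (S :\: A) T.
Proof.
move=> r0 AS le_A; set F := far rho ord r S T.
have le_AF : (#|A| <= #|F|)%N.
  apply: leq_trans (card_far_ge S r0); rewrite leq_min subset_leq_card // andbT.
  by rewrite -(ler_nat R); apply: le_trans le_A (nceil_ge r0).
have move_out : \sum_(x in A :\: F) D x <= \sum_(x in F :\: A) D x.
  rewrite -[X in X <= _]mul1r -[X in _ <= X]mul1r; apply: sum_dominated => //.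
    move=> x y; rewrite !inE => /andP[xF xA] /andP[yA yF].
    by apply/further_dist/(far_dominates yF); rewrite inE xF (subsetP AS).
  by rewrite !mul1r ler_nat !cardsD setIC leq_sub2r.
have split_sub (B : {set X}) : B \subset S -> \sum_(x in S) D x = \sum_(x in B) D x + \sum_(x in S :\: B) D x.
  by move=> BS; rewrite (big_setID B) (setIidPr BS).
have := split_sub A AS; have := split_sub F (far_subset r S).
have splitA : \sum_(x in A) D x = \sum_(x in A :&: F) D x + \sum_(x in A :\: F) D x.
  exact: big_setID.
have splitF : \sum_(x in F) D x = \sum_(x in A :&: F) D x + \sum_(x in F :\: A) D x.
  by rewrite setIC; apply: big_setID.
by rewrite /Rr /Rcost -/F; move: move_out splitA splitF; lra.
Qed.
End FurtherOrder.

Lemma well_rep_bounds (R : realType) (X : finType) (W A B : {set X}) :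
  (0 < #|B|)%N -> well_rep R W A B ->
  (#|A|%:R / #|W|%:R : R) / 2 * #|B|%:R <= #|B :&: A|%:R /\
  (#|B :&: A|%:R : R) <= 3%:R / 2 * (#|A|%:R / #|W|%:R) * #|B|%:R.
Proof.
rewrite /well_rep => B_gt0 /andP[lo hi]; have B_pos : (0 : R) < #|B|%:R by rewrite ltr0n.
by split; [rewrite -ler_pdivlMr | rewrite -ler_pdivrMr].
Qed.

(* Comparing the tail of a sequence with the sequence itself, term by term with
   a shift of one; the last term of s is dropped, hence G >= 0. *)
Lemma sum_behead_le (R : numDomainType) (I : Type) (x0 : I) (s : seq I) (F G : I -> R) :
  (forall b, 0 <= G b) ->
  (forall i, (i.+1 < size s)%N -> F (nth x0 s i.+1) <= G (nth x0 s i)) ->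
  \sum_(b <- behead s) F b <= \sum_(b <- s) G b.
Proof.
case: s => [|x t] G_ge0 step /=; first by rewrite !big_nil.
rewrite (big_nth x0) [in X in _ <= X](big_nth x0) /= !big_mkord big_ord_recr /=.
by apply: ler_wpDr => //; apply: ler_sum => i _; apply: step; rewrite /= ltnS.
Qed.

Section Bins.
Variables (R : realType) (X : finType) (rho : X -> X -> R) (T : {set X}).
Variables (z : R) (W : {set X}) (bins : seq {set X}).
Hypothesis lbd : linear_bin_division rho z W T bins.
Local Notation B i := (nth set0 bins i).

Lemma bin_subset i : (i < size bins)%N -> B i \subset W.
Proof.
case: lbd => <- _ i_lt; rewrite (big_nth set0) big_mkord.
exact: (bigcup_sup (Ordinal i_lt)).
Qed.

Lemma bins_size_gt0 : (0 < size bins)%N.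
Proof. by case: lbd => _ [_ [_ [_ [[] ]]]]. Qed.

Lemma first_bin_subset : B 0 \subset W.
Proof. exact: bin_subset bins_size_gt0. Qed.

Lemma first_bin_small : #|B 0|%:R <= 5%:R / 2 * z.
Proof. by case: lbd => _ [_ [_ [_ [[_ small] _]]]]. Qed.

Lemma sum_bins (Q : {set X}) (f : X -> R) :
  \sum_(x in W :&: Q) f x = \sum_(b <- bins) \sum_(x in b :&: Q) f x.
Proof.
case: lbd => cover [disj _].
have inW x : (x \in W) = [exists i : 'I_(size bins), x \in B i].
  rewrite -cover (big_nth set0) big_mkord.
  by apply/bigcupP/existsP => [[i _ xi]|[i xi]]; exists i.
have in_one (i j : 'I_(size bins)) x : i != j -> x \in B i -> x \notin B j.
  move=> nij xi; case: (ltngtP i j) => ij.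
  - by rewrite (disjointFr (disj i j _) xi) // ij ltn_ord.
  - by rewrite (disjointFl (disj j i _) xi) // ij ltn_ord.
  - by case/eqP: nij; apply: val_inj.
rewrite (big_nth set0) big_mkord.
rewrite [RHS](eq_bigr (fun i : 'I_(size bins) => \sum_x (if x \in B i :&: Q then f x else 0))); last first.
  by move=> i _; rewrite big_mkcond.
rewrite exchange_big [LHS]big_mkcond; apply: eq_bigr => x _ /=.
rewrite inE; have [xQ|xnQ] := boolP (x \in Q); last first.
  by rewrite andbF big1 // => i _; rewrite inE (negbTE xnQ) andbF.
rewrite andbT; have [|xnW] := boolP (x \in W).
  rewrite inW => /existsP[i xi]; rewrite (bigD1 i) //= inE xi xQ big1 ?addr0 // => j nji.
  by rewrite inE (negbTE (in_one i j x _ xi)) // eq_sym.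
rewrite big1 // => i _; rewrite inE; case: ifP => // /andP[xi _].
by move: xnW; rewrite inW => /existsP; case; exists i.
Qed.

Lemma sum_bins_tail (Q : {set X}) (f : X -> R) :
  \sum_(x in (W :&: Q) :\: B 0) f x = \sum_(b <- behead bins) \sum_(x in b :&: Q) f x.
Proof.
have first_bin : W :&: Q :&: B 0 = B 0 :&: Q.
  by rewrite setIAC (setIidPr first_bin_subset).
have := sum_bins Q f; rewrite (big_setID (B 0)) first_bin.
by case: bins => [|b0 t] /=; rewrite ?big_nil ?big_cons ?setI0 ?set0I ?big_set0; lra.
Qed.

Hypothesis z_gt0 : 0 < z.
Hypothesis z_le_W : z <= #|W|%:R.

Lemma bin_nonempty i : (i < size bins)%N -> (0 < #|B i|)%N.
Proof.
case: lbd => _ [_ [big_bins _]] i_lt; rewrite -(ltr0n R).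
apply: lt_le_trans (big_bins z_le_W i i_lt).
by rewrite !mulr_gt0 ?invr_gt0 ?ltr0n.
Qed.

Lemma bin_growth i : (i.+1 < size bins)%N -> (#|B i.+1|%:R : R) <= 3%:R / 2 * #|B i|%:R.
Proof.
case: lbd => _ [_ [_ [_ [_ [ratio _]]]]] i_lt.
have B_pos : (0 : R) < #|B i|%:R by rewrite ltr0n bin_nonempty // ltnW.
by rewrite -ler_pdivrMr // ratio.
Qed.

Variables (Y P : {set X}).
Hypothesis bins_rep : bins_well_rep R Y P bins.
Hypothesis dist_ge0 : forall x, 0 <= distT rho x T.
Local Notation D x := (distT rho x T).
Local Notation ratio := (#|P|%:R / #|Y|%:R : R).

Let ratio_ge0 : 0 <= ratio.
Proof. by rewrite divr_ge0. Qed.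

Lemma bin_rep_bounds i : (i < size bins)%N ->
  ratio / 2 * #|B i|%:R <= #|B i :&: P|%:R /\ (#|B i :&: P|%:R : R) <= 3%:R / 2 * ratio * #|B i|%:R.
Proof. by move=> i_lt; apply: well_rep_bounds; [apply: bin_nonempty | apply: (all_nthP _ bins_rep)]. Qed.

(* Points of bin i+1 are closer to T than those of bin i, while bin i+1 is at
   most 3/2 times as large and meets P in about the proportion ratio. *)
Lemma bin_step_upper i : (i.+1 < size bins)%N ->
  \sum_(x in B i.+1 :&: P) D x <= 9%:R / 4%:R * ratio * \sum_(x in B i) D x.
Proof.
move=> i_lt; rewrite -[X in X <= _]mul1r; apply: sum_dominated => //.
  move=> x y; rewrite inE => /andP[xB _] yB.
  by case: lbd => _ [_ [_ [_ [_ [_ mono]]]]]; apply: mono yB xB.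
have [_ hi] := bin_rep_bounds i_lt; have grow := bin_growth i_lt.
have coef_ge0 : 0 <= 3%:R / 2 * ratio by apply: mulr_ge0 ratio_ge0; lra.
have := ler_wpM2l coef_ge0 grow.
by rewrite mul1r; move: hi; lra.
Qed.

(* Symmetrically, bin i meets P in at least ratio/3 times the size of bin i+1. *)
Lemma bin_step_lower i : (i.+1 < size bins)%N ->
  ratio / 3%:R * \sum_(x in B i.+1) D x <= \sum_(x in B i :&: P) D x.
Proof.
move=> i_lt; rewrite -[X in _ <= X]mul1r; apply: sum_dominated => //.
- by apply: divr_ge0 (ratio_ge0) _.
- move=> x y xB; rewrite inE => /andP[yB _].
  by case: lbd => _ [_ [_ [_ [_ [_ mono]]]]]; apply: mono yB xB.
have [lo _] := bin_rep_bounds (ltnW i_lt); have grow := bin_growth i_lt.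
have := ler_wpM2l (divr_ge0 ratio_ge0 (ler0n R 3)) grow.
by rewrite mul1r; move: lo; lra.
Qed.

Lemma bins_upper :
  \sum_(x in (W :&: P) :\: B 0) D x <= 9%:R / 4%:R * ratio * \sum_(x in W) D x.
Proof.
rewrite sum_bins_tail -[W in X in _ <= X]setIT sum_bins mulr_sumr.
apply: sum_behead_le => [b|i i_lt]; last by rewrite setIT; apply: bin_step_upper.
by apply: mulr_ge0 (sumr_ge0 _ _) => //; apply: mulr_ge0 ratio_ge0; lra.
Qed.

Lemma bins_lower :
  ratio / 3%:R * \sum_(x in W :\: B 0) D x <= \sum_(x in W :&: P) D x.
Proof.
rewrite -{1}[W]setIT sum_bins_tail sum_bins mulr_sumr.
apply: sum_behead_le => [b|i i_lt]; first exact: sumr_ge0.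
by rewrite setIT; apply: bin_step_lower.
Qed.
End Bins.

Section Lemma8Parts.
Variables (R : realType) (X : finType) (rho : X -> X -> R) (ord : X -> nat) (T : {set X}).
Hypothesis ord_inj : injective ord.
Hypothesis dist_ge0 : forall x, 0 <= distT rho x T.
Variables (P2 Y : {set X}) (alpha ph : R) (k : nat).
Hypothesis alpha_gt0 : 0 < alpha.
Hypothesis ph_ge2 : 2 <= ph.
Hypothesis k_ge2 : (2 <= k)%N.
Hypothesis P2_sub : P2 \subset Y.
Hypothesis P2_share_lo : alpha * #|Y|%:R <= #|P2|%:R.
Hypothesis P2_share_hi : #|P2|%:R <= 6%:R / 5%:R * alpha * #|Y|%:R.
Local Notation ratio := (#|P2|%:R / #|Y|%:R : R).
Local Notation r2 := (2%:R * alpha * (k.+1)%:R * ph).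

Lemma ratio_bounds : (0 < #|Y|)%N -> alpha <= ratio <= 6%:R / 5%:R * alpha.
Proof.
by move=> Y_gt0; rewrite ler_pdivlMr ?ler_pdivrMr ?ltr0n // P2_share_lo P2_share_hi.
Qed.

Lemma r2_ge0 : 0 <= r2.
Proof.
have ph_ge0 : 0 <= ph by move: ph_ge2; lra.
by rewrite !mulr_ge0 // ltW.
Qed.

(* Numerical facts used below; note that lra ignores section hypotheses, which
   are therefore passed to it explicitly. *)
Let kR_ge2 : (2 : R) <= k%:R.
Proof. by rewrite (ler_nat R 2 k). Qed.

Let kph_ge4 : 4%:R <= k%:R * ph.
Proof. by have := ler_pM (ler0n R 2) (ler0n R 2) kR_ge2 ph_ge2; lra. Qed.

Local Notation Fb := (far rho ord (k%:R * ph) Y T).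

Section PartA.
Variable Bb : seq {set X}.
Local Notation W := (Y :\: Fb).
Local Notation B0 := (nth set0 Bb 0).
Hypothesis Y_large : k%:R * ph + 1 + ph / 3%:R <= #|Y|%:R.
Hypothesis Bb_div : linear_bin_division rho (ph / 3%:R) W T Bb.
Hypothesis Fb_rep : well_rep R Y P2 Fb.
Hypothesis Bb_rep : bins_well_rep R Y P2 Bb.

Lemma partA_far_card : k%:R * ph <= #|Fb|%:R < k%:R * ph + 1.
Proof.
have kph_ge0 : 0 <= k%:R * ph by move: kph_ge4; lra.
rewrite card_far ?nceil_ge ?nceil_lt // -leNgt; move: Y_large ph_ge2; lra.
Qed.

Lemma partA_W_large : ph / 3%:R <= #|W|%:R.
Proof.
rewrite cardsD (setIidPr (far_subset _ _ _ _ _)) natrB ?subset_leq_card ?far_subset //.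
by move: partA_far_card Y_large; lra.
Qed.

(* Removing P2 /\ (F_b \/ first bin), at most r2 points, from P2 leaves P2 /\ W
   outside the first bin, whose cost is at most (9/4)(6/5) alpha times that of W. *)
Lemma partA_cost : Rr rho ord r2 P2 T <= 27%:R / 10%:R * alpha * Rcost rho W T.
Proof.
have [kph_le_Fb Fb_lt] := andP partA_far_card.
have Fb_gt0 : (0 < #|Fb|)%N by rewrite -(ltr0n R); move: kph_ge4 kph_le_Fb; lra.
have Y_gt0 : (0 < #|Y|)%N by rewrite (leq_trans Fb_gt0) ?subset_leq_card ?far_subset.
have [_ ratio_hi] := andP (ratio_bounds Y_gt0).
have z_gt0 : 0 < ph / 3%:R by move: ph_ge2; lra.
have [_ Fb_hi] := well_rep_bounds Fb_gt0 Fb_rep.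
have [_ B0_hi] := bin_rep_bounds Bb_div z_gt0 partA_W_large Bb_rep (bins_size_gt0 Bb_div).
have B0_small := first_bin_small Bb_div.
set A := P2 :&: (Fb :|: B0).
have A_small : #|A|%:R <= r2.
  have card_A : (#|A| <= #|Fb :&: P2| + #|B0 :&: P2|)%N.
    by rewrite /A setIUr cardsU [P2 :&: Fb]setIC [P2 :&: B0]setIC leq_subr.
  apply: le_trans (_ : (#|Fb :&: P2| + #|B0 :&: P2|)%:R <= _); first by rewrite ler_nat.
  have bound_FB : #|Fb|%:R + #|B0|%:R <= k%:R * ph + 1 + 5%:R / 6%:R * ph by move: Fb_lt B0_small; lra.
  have := ler_wpM2l (divr_ge0 (ler0n R #|P2|) (ler0n R #|Y|)) bound_FB.
  have bound_pos : 0 <= k%:R * ph + 1 + 5%:R / 6%:R * ph by move: kph_ge4 ph_ge2; lra.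
  have slack : 0 <= k%:R * ph / 5%:R + ph / 2 - 9%:R / 5%:R by move: kph_ge4 ph_ge2; lra.
  have := ler_wpM2r bound_pos ratio_hi; have := mulr_ge0 (ltW alpha_gt0) slack.
  rewrite natrD -[(k.+1)%:R]natr1; move: Fb_hi B0_hi kph_ge4 ph_ge2; lra.
have P2_A : P2 :\: A = (W :&: P2) :\: B0.
  apply/setP => x; rewrite !inE; have [xP|] := boolP (x \in P2); rewrite ?andbF ?andbT //=.
  by rewrite (subsetP P2_sub x xP); case: (x \in Fb); case: (x \in B0).
apply: le_trans (far_exchange ord_inj dist_ge0 r2_ge0 (subsetIl P2 _) A_small) _.
rewrite P2_A; apply: le_trans (bins_upper Bb_div z_gt0 partA_W_large Bb_rep dist_ge0) _.
apply: ler_wpM2r; first exact: sumr_ge0.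
by move: ratio_hi; lra.
Qed.

Lemma partA_W_not_far : W \subset [set: X] :\: far rho ord (k%:R * ph) [set: X] T.
Proof.
have kph_ge0 : 0 <= k%:R * ph by move: kph_ge4; lra.
have Y_nt : ~~ (#|Y|%:R < k%:R * ph) by rewrite -leNgt; move: Y_large ph_ge2; lra.
apply/subsetP => x xW; rewrite !inE andbT.
apply: (notin_far kph_ge0 (in_setT x) (subsetT Fb)).
- by move=> y yF; exact: (far_dominates ord_inj yF xW).
- by rewrite (card_far rho T ord_inj).
Qed.
End PartA.

(* Part (a).  If Y is small, P2 has at most r2 points and psi = 0; otherwise F_b
   and the bins are well-represented and W avoids the far set of X. *)
Lemma partA (Bb : seq {set X}) :
  linear_bin_division rho (ph / 3%:R) (Y :\: Fb) T Bb ->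
  (far_trivial (k%:R * ph) Y || well_rep R Y P2 Fb) ->
  (bin_trivial (ph / 3%:R) (Y :\: Fb) || bins_well_rep R Y P2 Bb) ->
  (3%:R * alpha)^-1 * Rr rho ord r2 P2 T <= Rr rho ord (k%:R * ph) [set: X] T.
Proof.
move=> Bb_div Fb_ok Bb_ok.
have [Y_small|Y_large] := ltrP #|Y|%:R (k%:R * ph + 1 + ph / 3%:R).
  rewrite Rr_eq0 ?r2_ge0 ?mulr0 ?Rr_ge0 //.
  have slack : 0 <= 4%:R / 5%:R * k%:R * ph + 8%:R / 5%:R * ph - 6%:R / 5%:R.
    by move: kph_ge4 ph_ge2; lra.
  have := ler_wpM2l (ltW alpha_gt0) (ltW Y_small); have := mulr_ge0 (ltW alpha_gt0) slack.
  by rewrite -[(k.+1)%:R]natr1; move: P2_share_hi; lra.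
have Fb_rep : well_rep R Y P2 Fb.
  by move: Fb_ok; rewrite /far_trivial ltNge (_ : k%:R * ph <= _) //; move: Y_large ph_ge2; lra.
have Bb_rep : bins_well_rep R Y P2 Bb.
  by move: Bb_ok; rewrite /bin_trivial ltNge partA_W_large.
have W_cost := Rcost_subset dist_ge0 (partA_W_not_far Y_large).
have := partA_cost Y_large Bb_div Fb_rep Bb_rep.
have W_cost_ge0 : 0 <= alpha * Rcost rho (Y :\: Fb) T.
  by apply: mulr_ge0; [apply: ltW | apply: sumr_ge0].
rewrite ler_pdivrMl ?pmulr_rgt0 //; have := ler_wpM2l (ltW alpha_gt0) W_cost.
by rewrite /Rr; move: W_cost_ge0; lra.
Qed.

Local Notation r4 := (4%:R * (k.+1)%:R * ph).
Local Notation r5 := (5%:R * (k.+1)%:R * ph).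
Local Notation Fc := (far rho ord r4 Y T).

Let k1ph_ge : 3%:R * ph <= (k.+1)%:R * ph.
Proof. by rewrite ler_wpM2r ?ler_nat //; move: ph_ge2; lra. Qed.

Section PartB.
Variable Bc : seq {set X}.
Local Notation W := (Y :\: Fc).
Local Notation B0 := (nth set0 Bc 0).
Hypothesis Y_large : r5 <= #|Y|%:R.

Lemma partB_far_card : r4 <= #|Fc|%:R < r4 + 1.
Proof.
have r4_ge0 : 0 <= r4 by move: k1ph_ge ph_ge2; lra.
rewrite (card_far rho T ord_inj) ?nceil_ge ?nceil_lt // -leNgt.
by move: Y_large k1ph_ge ph_ge2; lra.
Qed.

Lemma partB_W_large : ph / 3%:R <= #|W|%:R.
Proof.
rewrite cardsD (setIidPr (far_subset _ _ _ _ _)) natrB ?subset_leq_card ?far_subset //.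
by move: partB_far_card Y_large k1ph_ge ph_ge2; lra.
Qed.

Hypothesis Fc_rep : well_rep R Y P2 Fc.

(* The far set of Y contains at least r2 points of P2, all further than the
   points of W, so P2 restricted to W avoids the r2-far set of P2. *)
Lemma partB_P2_cost : Rcost rho (W :&: P2) T <= Rr rho ord r2 P2 T.
Proof.
have [r4_le_Fc _] := andP partB_far_card.
have Fc_gt0 : (0 < #|Fc|)%N by rewrite -(ltr0n R); move: r4_le_Fc k1ph_ge ph_ge2; lra.
have Y_gt0 : (0 < #|Y|)%N by rewrite (leq_trans Fc_gt0) ?subset_leq_card ?far_subset.
have [ratio_lo _] := andP (ratio_bounds Y_gt0).
have [Fc_lo _] := well_rep_bounds Fc_gt0 Fc_rep.
have r2_le : r2 <= #|Fc :&: P2|%:R.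
  have := ler_wpM2r (ler0n R #|Fc|) ratio_lo; have := ler_wpM2l (ltW alpha_gt0) r4_le_Fc.
  by move: Fc_lo; lra.
rewrite /Rr; apply: (Rcost_subset dist_ge0); apply/subsetP => x; rewrite !inE => /andP[/andP[x_nF xY] xP].
rewrite xP andbT; apply: (notin_far r2_ge0 xP (subsetIr Fc P2)).
- move=> y; rewrite inE => /andP[yF _]; apply: (far_dominates ord_inj yF).
  by rewrite inE x_nF.
- by apply: nceil_le r2_ge0 r2_le.
Qed.

Hypothesis Bc_div : linear_bin_division rho (ph / 3%:R) W T Bc.

(* Removing the far set of Y together with the first bin is within budget r5. *)
Lemma partB_Y_cost : Rr rho ord r5 Y T <= Rcost rho (W :\: B0) T.
Proof.
have [_ Fc_lt] := andP partB_far_card.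
have B0_small := first_bin_small Bc_div.
have B0_sub := first_bin_subset Bc_div.
have r5_ge0 : 0 <= r5 by move: k1ph_ge ph_ge2; lra.
have A_sub : Fc :|: B0 \subset Y.
  by rewrite subUset far_subset (subset_trans B0_sub) ?subsetDl.
have A_small : #|Fc :|: B0|%:R <= r5.
  apply: le_trans (_ : (#|Fc| + #|B0|)%:R <= _); first by rewrite ler_nat cardsU leq_subr.
  by rewrite natrD; move: Fc_lt B0_small k1ph_ge ph_ge2; lra.
have -> : W :\: B0 = Y :\: (Fc :|: B0) by rewrite setDDl.
exact: (far_exchange ord_inj dist_ge0 r5_ge0 A_sub A_small).
Qed.
End PartB.

(* Part (b): alpha/3 R_r5(Y) <= ratio/3 R(W \ first bin) <= R(W /\ P2) <= R_r2(P2). *)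
Lemma partB (Bc : seq {set X}) :
  linear_bin_division rho (ph / 3%:R) (Y :\: Fc) T Bc ->
  (far_trivial r4 Y || well_rep R Y P2 Fc) ->
  (bin_trivial (ph / 3%:R) (Y :\: Fc) || bins_well_rep R Y P2 Bc) ->
  9%:R^-1 * Rr rho ord r5 Y T <= (3%:R * alpha)^-1 * Rr rho ord r2 P2 T.
Proof.
move=> Bc_div Fc_ok Bc_ok.
have psi_ge0 : 0 <= (3%:R * alpha)^-1 * Rr rho ord r2 P2 T.
  by rewrite mulr_ge0 ?Rr_ge0 // invr_ge0 mulr_ge0 // ltW.
have [Y_small|Y_large] := ltrP #|Y|%:R r5.
  have r5_ge0 : 0 <= r5 by move: k1ph_ge ph_ge2; lra.
  by rewrite Rr_eq0 ?mulr0 // ltW.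
have Fc_rep : well_rep R Y P2 Fc.
  by move: Fc_ok; rewrite /far_trivial ltNge (_ : r4 <= _) //; move: Y_large k1ph_ge ph_ge2; lra.
have Bc_rep : bins_well_rep R Y P2 Bc.
  by move: Bc_ok; rewrite /bin_trivial ltNge partB_W_large.
have z_gt0 : 0 < ph / 3%:R by move: ph_ge2; lra.
have [r4_le_Fc _] := andP (partB_far_card Y_large).
have Y_gt0 : (0 < #|Y|)%N.
  by rewrite -(ltr0n R); move: Y_large k1ph_ge ph_ge2; lra.
have [ratio_lo _] := andP (ratio_bounds Y_gt0).
have bins_cost := bins_lower Bc_div z_gt0 (partB_W_large Y_large) Bc_rep dist_ge0.
have P2_cost := partB_P2_cost Y_large Fc_rep.
have Y_cost := partB_Y_cost Y_large Bc_div.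
have tail_ge0 : 0 <= Rcost rho (Y :\: Fc :\: nth set0 Bc 0) T by apply: sumr_ge0.
have := ler_wpM2l (ltW alpha_gt0) Y_cost; have := ler_wpM2r tail_ge0 ratio_lo.
by rewrite ler_pdivlMl ?pmulr_rgt0 //; move: bins_cost P2_cost; rewrite /Rcost; lra.
Qed.
End Lemma8Parts.

Lemma distT_ge0 (R : realType) (X : finType) (rho : X -> X -> R) (T : {set X}) :
  is_metric rho -> forall x, 0 <= distT rho x T.
Proof.
case=> rho_ge0 _ _ _ x; rewrite /distT; case: pickP => [y0 _|_ //].
by apply: (big_ind (fun v => 0 <= v)) => // a b a_ge0 b_ge0; rewrite le_min a_ge0.
Qed.

(* phi_alpha >= 2: x = 32k/delta >= 2, so ln x >= 1 - 1/x >= 1/2, and alpha <= 1/6. *)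
Lemma phi_ge2 (R : realType) (k : nat) (delta alpha : R) : (2 <= k)%N -> 0 < delta < 1 ->
  0 < alpha -> alpha <= 1 / 6%:R -> 2 <= phi k delta alpha.
Proof.
move=> k_ge2 /andP[delta_gt0 delta_lt1] alpha_gt0 alpha_le; rewrite /phi.
set x := 32%:R * k%:R / delta.
have x_ge2 : 2 <= x.
  have kR_ge2 : (2 : R) <= k%:R by rewrite (ler_nat R 2 k).
  by rewrite /x ler_pdivlMr //; lra.
have inv_le : x^-1 <= 2^-1 by rewrite lef_pV2 ?posrE //; lra.
have x_gt0 : 0 < x by lra.
have ln_step : ln (1 + (x^-1 - 1)) <= x^-1 - 1.
  by apply: le_ln1Dx; rewrite ltrBrDl addrN invr_gt0.
move: ln_step; rewrite addrC subrK lnV ?posrE // => ln_step.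
have ln_lo : 1 / 2 <= ln x by move: inv_le; rewrite div1r; lra.
by rewrite ler_pdivlMr //; lra.
Qed.

Lemma share_in_complement (R : realFieldType) (X : finType) (P1 P2 : {set X}) (alpha : R) :
  0 < alpha -> alpha <= 1 / 6%:R ->
  #|P1|%:R = alpha * #|X|%:R -> #|P2|%:R = alpha * #|X|%:R ->
  alpha * #|~: P1|%:R <= #|P2|%:R <= 6%:R / 5%:R * alpha * #|~: P1|%:R.
Proof.
move=> alpha_gt0 alpha_le cardP1 cardP2.
have cardY : #|~: P1|%:R = (1 - alpha) * #|X|%:R :> R.
  have /(congr1 (fun m => m%:R : R)) := cardsC P1; rewrite natrD cardP1; lra.
have alpha_n_ge0 : 0 <= alpha * #|X|%:R by rewrite mulr_ge0 // ltW.
have := mulr_ge0 (ltW alpha_gt0) alpha_n_ge0.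
have slack : 0 <= 1 / 6%:R - alpha by lra.
have := mulr_ge0 alpha_n_ge0 slack.
rewrite cardY cardP2; lra.
Qed.

Theorem lemma8 (R : realType) (X : finType) (rho : X -> X -> R)
  (ord : X -> nat) (k : nat) (delta alpha : R) (P1 P2 T : {set X})
  (Bb Bc : seq {set X}) :
  is_metric rho ->
  injective ord ->
  (2 <= k)%N ->
  0 < delta < 1 ->
  0 < alpha <= 1 / 6%:R ->
  (exists m : nat, alpha * #|X|%:R = m%:R) ->
  [disjoint P1 & P2] ->
  #|P1|%:R = alpha * #|X|%:R ->
  #|P2|%:R = alpha * #|X|%:R ->
  T != set0 ->
  let ph := phi k delta alpha in
  let psi := (3%:R * alpha)^-1 * Rr rho ord (2%:R * alpha * (k.+1)%:R * ph) P2 T in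
  let Y := ~: P1 in
  let Fb := far rho ord (k%:R * ph) Y T in
  let Fc := far rho ord (4%:R * (k.+1)%:R * ph) Y T in
  linear_bin_division rho (ph / 3%:R) (Y :\: Fb) T Bb ->
  linear_bin_division rho (ph / 3%:R) (Y :\: Fc) T Bc ->
  ((far_trivial (k%:R * ph) Y || well_rep R Y P2 Fb) ->
   (bin_trivial (ph / 3%:R) (Y :\: Fb) || bins_well_rep R Y P2 Bb) ->
   psi <= Rr rho ord (k%:R * ph) [set: X] T)
  /\
  ((far_trivial (4%:R * (k.+1)%:R * ph) Y || well_rep R Y P2 Fc) ->
   (bin_trivial (ph / 3%:R) (Y :\: Fc) || bins_well_rep R Y P2 Bc) ->
   9%:R^-1 * Rr rho ord (5%:R * (k.+1)%:R * ph) Y T <= psi).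
Proof.
move=> metric ord_inj k_ge2 delta_bds /andP[alpha_gt0 alpha_le] _ disj12 cardP1 cardP2 _.
move=> ph psi Y Fb Fc Bb_div Bc_div.
have dist_ge0 := distT_ge0 T metric.
have ph_ge2 : 2 <= ph by apply: phi_ge2.
have P2_sub : P2 \subset Y by rewrite -disjoints_subset disjoint_sym.
have /andP[share_lo share_hi] := share_in_complement alpha_gt0 alpha_le cardP1 cardP2.
split.
- exact: (partA ord_inj dist_ge0 alpha_gt0 ph_ge2 k_ge2 P2_sub share_lo share_hi Bb_div).
- exact: (partB ord_inj dist_ge0 alpha_gt0 ph_ge2 k_ge2 share_lo share_hi Bc_div).
Qed.
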